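(* Let $\Sigma$ be an arbitrary group and $A$ a difference ring, and let $X=\operatorname{PSpec}A$ with the topology whose closed sets are the sets $V(E)$, $E\subseteq A$. For $s\in A$ let $X_s=X\setminus V(s)$. Then: (1) for all $s,t\in A$, $X_s\cap X_t=\bigcup_{\sigma,\tau\in\Sigma}X_{\sigma(s)\tau(t)}$; (2) $X_s=\emptyset$ if and only if $s$ is nilpotent; (3) $X$ is quasi-compact; (4) the maps $\mathfrak t\mapsto V(\mathfrak t)$ and $Z\mapsto\bigcap_{\mathfrak q\in Z}\mathfrak q$ are mutually inverse bijections between the set of radical difference ideals of $A$ and the set of closed subsets of $X$.
   Context: Let $\Sigma$ be a group. A difference ring is a commutative ring $A$ with identity together with an action of $\Sigma$ on $A$ by ring automorphisms. A difference ideal is an ideal $\mathfrak a$ with $\sigma(\mathfrak a)\subseteq\mathfrak a$ for all $\sigma\in\Sigma$. A difference ideal $\mathfrak q$ is pseudoprime if there is a multiplicatively closed subset $S\subseteq A$ with $1\in S$ such that $\mathfrak q$ is maximal among difference ideals of $A$ not meeting $S$. $\operatorname{PSpec}A$ denotes the set of pseudoprime ideals of $A$, and for $E\subseteq A$, $V(E)$ is the set of pseudoprime ideals containing $E$; these sets are the closed sets of a topology on $\operatorname{PSpec}A$. *)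

(* Subsets of A are predicates A -> Prop; points of PSpec A
   are predicates q : A -> Prop satisfying [pseudoprime act q]. *)
From Stdlib Require Import List.
From HB Require Import structures.
From mathcomp Require Import all_boot all_order all_algebra.
Set Implicit Arguments. Unset Strict Implicit. Unset Printing Implicit Defensive.
Import GRing.Theory.
Local Open Scope ring_scope.

Record is_group (G : Type) (mul : G -> G -> G) (one : G) (inv : G -> G) : Prop := {
  grp_assoc : forall x y z, mul x (mul y z) = mul (mul x y) z;
  grp_id_l  : forall x, mul one x = x;
  grp_inv_l : forall x, mul (inv x) x = one }.

(* An action of the group on the ring A by ring automorphisms
   (ring endomorphisms forming a group action are automatically bijective). *)
Record is_difference_action (G : Type) (mul : G -> G -> G) (one : G)
    (A : comPzRingType) (act : G -> A -> A) : Prop := {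
  act_add  : forall g a b, act g (a + b) = act g a + act g b;
  act_mulr : forall g a b, act g (a * b) = act g a * act g b;
  act_1    : forall g, act g 1 = 1;
  act_one  : forall a, act one a = a;
  act_comp : forall g h a, act (mul g h) a = act g (act h a) }.

Section Ideals.
Variables (G : Type) (A : comPzRingType) (act : G -> A -> A).

Definition is_ideal (I : A -> Prop) : Prop :=
  I 0 /\ (forall a b, I a -> I b -> I (a + b)) /\ (forall r a, I a -> I (r * a)).

Definition is_diff_ideal (I : A -> Prop) : Prop :=
  is_ideal I /\ (forall g a, I a -> I (act g a)).

Definition is_mult_closed (S : A -> Prop) : Prop :=
  S 1 /\ (forall a b, S a -> S b -> S (a * b)).

Definition disjoint_from (I S : A -> Prop) : Prop := forall a, I a -> S a -> False.

Definition pseudoprime (q : A -> Prop) : Prop :=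
  exists S : A -> Prop, is_mult_closed S /\
    is_diff_ideal q /\ disjoint_from q S /\
    (forall J, is_diff_ideal J -> disjoint_from J S ->
       (forall a, q a -> J a) -> forall a, J a -> q a).

Definition Vset (E : A -> Prop) (q : A -> Prop) : Prop :=
  pseudoprime q /\ forall a, E a -> q a.

Definition Xs (s : A) (q : A -> Prop) : Prop :=
  pseudoprime q /\ ~ q s.

Definition is_closed (Z : (A -> Prop) -> Prop) : Prop :=
  exists E : A -> Prop, forall q, Z q <-> Vset E q.

Definition bigcap_ideals (Z : (A -> Prop) -> Prop) (a : A) : Prop :=
  forall q, Z q -> q a.

Definition is_radical_diff_ideal (t : A -> Prop) : Prop :=
  is_diff_ideal t /\ forall a (n : nat), t (a ^+ n) -> t a.

(* quasi-compactness, phrased with the open sets X \ V(E) *)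
Definition PSpec_quasi_compact : Prop :=
  forall (I : Type) (E : I -> A -> Prop),
    (forall q, pseudoprime q -> exists i, ~ Vset (E i) q) ->
    exists l : list I, forall q, pseudoprime q ->
      exists i, List.In i l /\ ~ Vset (E i) q.

End Ideals.

(* The whole proposition rests on three facts about pseudoprime ideals.
   - Existence (Zorn): a difference ideal disjoint from a multiplicatively
     closed set S extends to a difference ideal maximal among those disjoint
     from S, i.e. to a pseudoprime ideal.  Consequently the radical of a
     difference ideal t is the intersection of the pseudoprimes containing t
     ("difference Nullstellensatz", [pspec_radical]).
   - Radicality: the radical of a pseudoprime q is a difference ideal still
     disjoint from S, hence equals q by maximality.
   - Difference primality: if a, b are not in q, some product
     act g a * act h b is not in q.  Adjoining a (resp. b) to q produces a
     difference ideal meeting S; if all products act g a * act h b were in q,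
     a "difference annihilator" argument shows that the product of these two
     ideals lies in q, so q meets S.
   Part (1) is primality, part (2) the Nullstellensatz for the zero ideal,
   part (3) the Nullstellensatz applied to the difference ideal generated by
   finitely many of the E i, and part (4) the Nullstellensatz for radical
   difference ideals together with radicality of pseudoprimes. *)
From HB Require Import structures.
From mathcomp Require Import all_boot all_order all_algebra.
From mathcomp Require Import boolp classical_sets.
Set Implicit Arguments. Unset Strict Implicit. Unset Printing Implicit Defensive.
Import GRing.Theory.
Local Open Scope ring_scope.
Local Open Scope classical_set_scope.

Section RingIdeals.
Variable A : comPzRingType.

Lemma ideal_mulr (J : set A) a r : is_ideal J -> J a -> J (a * r).
Proof. by move=> [_ [_ JM]] Ja; rewrite mulrC; apply: JM. Qed.

Lemma ideal_exp_mono (J : set A) x m n :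
  is_ideal J -> J (x ^+ m) -> (m <= n)%N -> J (x ^+ n).
Proof. by move=> JI Jx /subnKC <-; rewrite exprD; apply: ideal_mulr. Qed.

Lemma radical_ideal (J : set A) :
  is_ideal J -> is_ideal (fun a => exists n, J (a ^+ n)).
Proof.
move=> JI; have [J0 [JD JM]] := JI.
split; first by exists 1%N; rewrite expr1.
split; last by move=> r x [m Jx]; exists m; rewrite exprMn; apply: JM.
move=> x y [m Jx] [k Jy]; exists (m + k)%N; rewrite exprDn.
apply: (big_ind J) => // i _; rewrite -mulr_natl; apply: (JM).
have [ki|ik] := leqP k i; first by apply: JM; apply: ideal_exp_mono Jy ki.
apply: ideal_mulr => //; apply: (ideal_exp_mono JI Jx).
by rewrite -addnBA ?leq_addr // ltnW.
Qed.

Lemma powers_mult_closed (a : A) : is_mult_closed (fun x => exists n, x = a ^+ n).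
Proof.
split; first by exists 0%N; rewrite expr0.
by move=> x y [m ->] [n ->]; exists (m + n)%N; rewrite exprD.
Qed.

Lemma mult_closed_exp (S : set A) x n : is_mult_closed S -> S x -> S (x ^+ n).
Proof.
move=> [S1 SM] Sx; elim: n => [|n IHn]; first by rewrite expr0.
by rewrite exprS; apply: SM.
Qed.

End RingIdeals.

Section DifferenceIdeals.
Variables (G : Type) (mul : G -> G -> G) (one : G).
Variables (A : comPzRingType) (act : G -> A -> A).
Hypothesis Hact : is_difference_action mul one act.

Lemma act0 g : act g 0 = 0.
Proof. by apply/(@addrI _ (act g 0)); rewrite -(act_add Hact) !addr0. Qed.

Lemma actX g x n : act g (x ^+ n) = act g x ^+ n.
Proof.
elim: n => [|n IHn]; first by rewrite !expr0 (act_1 Hact).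
by rewrite !exprS (act_mulr Hact) IHn.
Qed.

Lemma zero_diff_ideal : is_diff_ideal act [set 0].
Proof.
split; last by move=> g _ ->; apply: act0.
split=> //; split; first by move=> _ _ -> ->; rewrite addr0.
by move=> r _ ->; rewrite mulr0.
Qed.

Lemma radical_diff_ideal q :
  is_diff_ideal act q -> is_diff_ideal act (fun a => exists n, q (a ^+ n)).
Proof.
move=> [qI qA]; split; first exact: radical_ideal.
by move=> g x [n qx]; exists n; rewrite -actX; apply: qA.
Qed.

Lemma bigcap_diff_ideal (Z : set (set A)) :
  (forall J, Z J -> is_diff_ideal act J) -> is_diff_ideal act (bigcap_ideals Z).
Proof.
move=> ZD; split; [split; [|split]|].
- by move=> J /ZD [[]].
- move=> a b Za Zb J ZJ; have [[_ [JD _]] _] := ZD J ZJ.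
  by apply: JD; [apply: Za | apply: Zb].
- by move=> r a Za J ZJ; have [[_ [_ JM]] _] := ZD J ZJ; apply: JM; apply: Za.
- by move=> g a Za J ZJ; have [_ JA] := ZD J ZJ; apply: JA; apply: Za.
Qed.

Lemma directed_diff_ideal (U : set A) :
  U 0 ->
  (forall x y, U x -> U y ->
     exists2 Y, is_diff_ideal act Y & [/\ Y `<=` U, Y x & Y y]) ->
  is_diff_ideal act U.
Proof.
move=> U0 common; split; [split=> //; split|].
- move=> x y Ux Uy; have [Y [[_ [YD _]] _] [YU Yx Yy]] := common x y Ux Uy.
  exact/YU/YD.
- move=> r x Ux; have [Y [[_ [_ YM]] _] [YU Yx _]] := common x x Ux Ux.
  exact/YU/YM.
- move=> g x Ux; have [Y [_ YA] [YU Yx _]] := common x x Ux Ux.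
  exact/YU/YA.
Qed.

Lemma chain_union_diff_ideal (I : set A) (F : set (set A)) :
  is_diff_ideal act I -> (forall X, F X -> is_diff_ideal act (I `|` X)) ->
  total_on F subset -> is_diff_ideal act (I `|` \bigcup_(X in F) X).
Proof.
move=> ID FD Ftot.
have F0D X : (set0 |` F) X -> is_diff_ideal act (I `|` X).
  by case=> [->|/FD //]; rewrite setU0.
have member x : (I `|` \bigcup_(X in F) X) x ->
    exists2 X, (set0 |` F) X & (I `|` X) x.
  by case=> [Ix|[X FX Xx]]; [exists set0; [left|left] | exists X; [right|right]].
apply: directed_diff_ideal; first by left; case: ID => [[]].
move=> x y /member [X FX Xx] /member [Y FY Yy].
have XY_cmp : X `<=` Y \/ Y `<=` X.
  case: FX FY => [->|FX] [->|FY]; try by [left | right].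
  exact: Ftot.
have sub Z : (set0 |` F) Z -> I `|` Z `<=` I `|` \bigcup_(X in F) X.
  by case=> [->|FZ]; apply: setUS => //; apply: bigcup_sup.
case: XY_cmp => [XY|YX].
- exists (I `|` Y); first exact: F0D.
  by split=> //; [exact: sub | case: Xx => ?; [left | right; apply: XY]].
- exists (I `|` X); first exact: F0D.
  by split=> //; [exact: sub | case: Yy => ?; [left | right; apply: YX]].
Qed.

Definition diff_span (E : set A) : set A :=
  bigcap_ideals (fun J => is_diff_ideal act J /\ E `<=` J).

Lemma diff_span_ideal E : is_diff_ideal act (diff_span E).
Proof. by apply: bigcap_diff_ideal => J []. Qed.

Lemma diff_span_sub E : E `<=` diff_span E.
Proof. by move=> e Ee J [_ EJ]; apply: EJ. Qed.

Lemma diff_span_min E J :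
  is_diff_ideal act J -> E `<=` J -> diff_span E `<=` J.
Proof. by move=> JD EJ a; apply. Qed.

Lemma diff_span_mono E E' : E `<=` E' -> diff_span E `<=` diff_span E'.
Proof.
move=> EE'; apply: diff_span_min; first exact: diff_span_ideal.
by move=> e /EE'; apply: diff_span_sub.
Qed.

(* Zorn is applied to the
   sets X such that I `|` X is a difference ideal disjoint from S (this family
   contains set0, so empty chains cause no trouble). *)
Lemma exists_pseudoprime (I S : set A) :
  is_diff_ideal act I -> is_mult_closed S -> disjoint_from I S ->
  exists q, [/\ pseudoprime act q, I `<=` q & disjoint_from q S].
Proof.
move=> ID SM IS.
pose P (X : set A) := is_diff_ideal act (I `|` X) /\ disjoint_from (I `|` X) S.
have [M [[MD MS] Mmax]] : exists M, P M /\ forall B, M `<` B -> ~ P B.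
  apply: Zorn_bigcup => F FP Ftot; split.
    by apply: chain_union_diff_ideal => // X /FP [].
  move=> a [Ia|[X FX Xa]]; first exact: IS.
  by have [_ XS] := FP X FX; apply: XS; right.
exists (I `|` M); split; [|by move=> a Ia; left | by []].
exists S; split => //; split => //; split => //.
move=> J JD JS MJ; suff JM : J `<=` M by move=> a /JM; right.
apply: contrapT => nJM; apply: (Mmax J).
  by split=> // a Ma; apply: MJ; right.
by rewrite /P setUidr // => a Ia; apply: MJ; left.
Qed.

Lemma pseudoprime_avoiding t a :
  is_diff_ideal act t -> (forall n, ~ t (a ^+ n)) ->
  exists q, [/\ pseudoprime act q, t `<=` q & ~ q a].
Proof.
move=> tD ta.
have [|q [qpp tq qS]] := exists_pseudoprime tD (powers_mult_closed a).
  by move=> x tx [n xa]; apply: (ta n); rewrite -xa.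
by exists q; split=> // qa; apply: (qS a qa); exists 1%N; rewrite expr1.
Qed.

Lemma pspec_radical t a :
  is_diff_ideal act t -> (forall q, pseudoprime act q -> t `<=` q -> q a) ->
  exists n, t (a ^+ n).
Proof.
move=> tD all_q; apply: contrapT => /forallNP ta.
by have [q [qpp tq qa]] := pseudoprime_avoiding tD ta; apply: qa; apply: all_q.
Qed.

Lemma pseudoprime_diff_ideal q : pseudoprime act q -> is_diff_ideal act q.
Proof. by case=> S [_ []]. Qed.

Lemma pseudoprime_not1 q : pseudoprime act q -> ~ q 1.
Proof. by case=> S [[S1 _] [_ [qS _]]] q1; apply: (qS 1). Qed.

(* Pseudoprime ideals are radical: the radical of q is a difference ideal
   still disjoint from S, so maximality forces it to equal q. *)
Lemma pseudoprime_radical q a n : pseudoprime act q -> q (a ^+ n) -> q a.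
Proof.
case=> S [SM [qD [qS qmax]]] qan.
have radS : disjoint_from (fun x => exists n, q (x ^+ n)) S.
  by move=> x [m qx] Sx; apply: (qS _ qx); apply: mult_closed_exp.
apply: (qmax _ (radical_diff_ideal qD) radS); last by exists n.
by move=> x qx; exists 1%N; rewrite expr1.
Qed.

(* It is a difference ideal as soon as q
   is, which lets us compare products of generated difference ideals. *)
Definition diff_ann (q X : set A) : set A :=
  fun y => forall x h, X x -> q (x * act h y).

Lemma diff_ann_ideal q X :
  is_diff_ideal act q -> is_diff_ideal act (diff_ann q X).
Proof.
move=> [[q0 [qD qM]] _]; split; [split; [|split]|].
- by move=> x h _; rewrite act0 mulr0.
- move=> y z qy qz x h Xx; rewrite (act_add Hact) mulrDr.
  by apply: qD; [apply: qy | apply: qz].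
- by move=> r y qy x h Xx; rewrite (act_mulr Hact) mulrCA; apply: qM; apply: qy.
- by move=> g y qy x h Xx; rewrite -(act_comp Hact); apply: qy.
Qed.

Lemma diff_ann_mul q X x y : X x -> diff_ann q X y -> q (x * y).
Proof. by move=> Xx /(_ x one Xx); rewrite (act_one Hact). Qed.

Lemma diff_span_ann q X Y :
  is_diff_ideal act q -> Y `<=` diff_ann q X ->
  diff_span (q `|` Y) `<=` diff_ann q X.
Proof.
move=> qD YX; apply: diff_span_min; first exact: diff_ann_ideal.
have [[_ [_ qM]] qA] := qD.
by move=> y [qy x h _|/YX //]; apply: qM; apply: qA.
Qed.

Lemma span_product q a b :
  is_diff_ideal act q -> (forall g h, q (act g a * act h b)) ->
  forall x y, diff_span (q `|` [set a]) x -> diff_span (q `|` [set b]) y ->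
  q (x * y).
Proof.
move=> qD qab.
pose orbit_a x := exists g, x = act g a.
have span_b : diff_span (q `|` [set b]) `<=` diff_ann q orbit_a.
  by apply: diff_span_ann => // _ -> _ h [g ->]; apply: qab.
have span_a :
    diff_span (q `|` [set a]) `<=` diff_ann q (diff_span (q `|` [set b])).
  apply: diff_span_ann => // _ -> y h /span_b b_ann; rewrite mulrC.
  by apply: diff_ann_mul b_ann; exists h.
by move=> x y /span_a a_ann span_y; rewrite mulrC; apply: diff_ann_mul a_ann.
Qed.

(* Difference primality of pseudoprime ideals: by maximality, adjoining an
   element c outside q yields a difference ideal meeting S; were all the
   products act g a * act h b in q, the product of the two ideals obtained
   from a and b would lie in q by [span_product], so q would meet S. *)
Lemma pseudoprime_prime q a b :
  pseudoprime act q -> ~ q a -> ~ q b -> exists g h, ~ q (act g a * act h b).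
Proof.
case=> S [[_ SM] [qD [qS qmax]]] qa qb.
have meets c : ~ q c -> exists2 s, S s & diff_span (q `|` [set c]) s.
  move=> qc; apply: contrapT => nmeet; apply: qc.
  apply: (qmax (diff_span (q `|` [set c])) (@diff_span_ideal _)).
  - by move=> s spn Ss; apply: nmeet; exists s.
  - by move=> x qx; apply: diff_span_sub; left.
  - by apply: diff_span_sub; right.
apply: contrapT => nprod.
have all_in g h : q (act g a * act h b).
  by apply: contrapT => ?; apply: nprod; exists g, h.
have [s Ss span_s] := meets a qa; have [s' Ss' span_s'] := meets b qb.
exact: (qS _ (span_product qD all_in span_s span_s') (SM _ _ Ss Ss')).
Qed.

Lemma Xs_inter s t q :
  Xs act s q /\ Xs act t q <-> exists g h, Xs act (act g s * act h t) q.
Proof.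
split.
  move=> [[qpp qs] [_ qt]]; have [g [h qst]] := pseudoprime_prime qpp qs qt.
  by exists g, h.
move=> [g [h [qpp qst]]]; have [[_ [_ qM]] qA] := pseudoprime_diff_ideal qpp.
split; split=> // qx; apply: qst.
  by rewrite mulrC; apply: qM; apply: qA.
by apply: qM; apply: qA.
Qed.

Lemma Xs_empty s : (forall q, ~ Xs act s q) <-> exists n, s ^+ n = 0.
Proof.
split=> [noXs | [n sn0] q [qpp qs]].
  apply: pspec_radical zero_diff_ideal _ => q qpp zq.
  by apply: contrapT => qs; apply: (noXs q).
apply: qs; apply: (pseudoprime_radical (n := n) qpp); rewrite sn0.
by have [[]] := pseudoprime_diff_ideal qpp.
Qed.

Definition span_list (I : Type) (E : I -> set A) (l : list I) : set A :=
  diff_span (fun e => exists2 i, List.In i l & E i e).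

Lemma finite_spans_diff_ideal (I : Type) (E : I -> set A) :
  is_diff_ideal act (fun a => exists l, span_list E l a).
Proof.
apply: directed_diff_ideal; first by exists nil => J [[[]]].
move=> x y [l lx] [l' ly]; exists (span_list E (l ++ l')).
  exact: diff_span_ideal.
split; first by move=> z; exists (l ++ l').
- apply: diff_span_mono lx => e [i li Eie]; exists i => //.
  by apply: List.in_or_app; left.
- apply: diff_span_mono ly => e [i li Eie]; exists i => //.
  by apply: List.in_or_app; right.
Qed.

(* Part (3): if the opens X \ V(E i) cover PSpec A, then no pseudoprime
   contains all the E i, so by the Nullstellensatz 1 lies in the span of
   finitely many E i, and these finitely many opens already cover. *)
Lemma pspec_quasi_compact : PSpec_quasi_compact act.
Proof.
move=> I E cover.
have [l span1] : exists l, span_list E l 1.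
  suff [n] : exists n, exists l, span_list E l (1 ^+ n) by rewrite expr1n.
  apply: pspec_radical (finite_spans_diff_ideal E) _ => q qpp spans_q.
  have [i] := cover q qpp; case; split=> // e Eie.
  by apply: spans_q; exists [:: i]; apply: diff_span_sub; exists i => //; left.
exists l => q qpp; apply: contrapT => nall; apply: (pseudoprime_not1 qpp).
apply: diff_span_min (pseudoprime_diff_ideal qpp) _ _ span1.
move=> e [i li Eie]; apply: contrapT => qe; apply: nall; exists i.
by split=> // -[_ /(_ e Eie)].
Qed.

Lemma radical_closed t :
  is_radical_diff_ideal act t ->
  is_closed act (Vset act t) /\ (forall a, bigcap_ideals (Vset act t) a <-> t a).
Proof.
move=> [tD trad]; split; first by exists t.
move=> a; split=> [cap_a | ta q [_ tq]]; last exact: tq.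
have [n] := pspec_radical (a := a) tD (fun q qpp tq => cap_a q (conj qpp tq)).
exact: trad.
Qed.

Lemma closed_radical Z :
  is_closed act Z ->
  is_radical_diff_ideal act (bigcap_ideals Z) /\
  (forall q, Vset act (bigcap_ideals Z) q <-> Z q).
Proof.
move=> [E ZE]; have Zpp q : Z q -> pseudoprime act q by move=> /ZE [].
split.
  split; first by apply: bigcap_diff_ideal => q /Zpp /pseudoprime_diff_ideal.
  by move=> a n cap_an q Zq; apply: pseudoprime_radical (Zpp q Zq) (cap_an q Zq).
move=> q; split=> [[qpp capq] | Zq].
  by apply/ZE; split=> // e Ee; apply: capq => q' /ZE [_]; apply.
by split=> [|a /(_ q Zq)]; first exact: Zpp.
Qed.

End DifferenceIdeals.

Theorem proposition3p3 (G : Type) (mul : G -> G -> G) (one : G) (inv : G -> G)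
    (A : comPzRingType) (act : G -> A -> A)
    (HG : is_group mul one inv) (Hact : is_difference_action mul one act) :
  (* (1) *)
  (forall (s t : A) (q : A -> Prop),
      (Xs act s q /\ Xs act t q) <->
      (exists g h : G, Xs act (act g s * act h t) q)) /\
  (* (2) *)
  (forall s : A, (forall q, ~ Xs act s q) <-> (exists n : nat, s ^+ n = 0)) /\
  (* (3) *)
  PSpec_quasi_compact act /\
  (* (4) *)
  (forall t : A -> Prop, is_radical_diff_ideal act t ->
      is_closed act (Vset act t) /\
      (forall a, bigcap_ideals (Vset act t) a <-> t a)) /\
  (forall Z : (A -> Prop) -> Prop, is_closed act Z ->
      is_radical_diff_ideal act (bigcap_ideals Z) /\
      (forall q, Vset act (bigcap_ideals Z) q <-> Z q)).
Proof.
split; first by move=> s t q; exact: (Xs_inter Hact s t q).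
split; first by move=> s; exact: (Xs_empty Hact s).
split; first exact: pspec_quasi_compact.
split; first by move=> t; exact: radical_closed.
by move=> Z closedZ; exact: (closed_radical Hact closedZ).
Qed.
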